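(* Let $\varepsilon>0$, $\gamma\in(0,1)$, and consider the tests $\tilde\psi^i_t=\mathbf 1\{E^i_t\ge N/\gamma\}$ with $\tilde\tau_{\boldsymbol\psi}=\min_i\inf\{t\ge1:\tilde\psi^i_t=1\}$, as in the context. For any $\mathbf s\in\tilde{\mathfrak S}(\mathbf w_{\mathbf v},\varepsilon)$, there exists a universal constant $C>0$ such that $$\mathbb E^{\mathbf s}[\tilde\tau_{\boldsymbol\psi}]\le\tilde\tau_\varepsilon=\frac{10\log(1/\gamma)}{\varepsilon^2}+C\,\frac{1+|\log\underline{\mathbf w_{\mathbf v}}|}{\varepsilon^5},$$ where $\underline{\mathbf w_{\mathbf v}}=\min_{i\in[N]}\min_{a\in\mathcal A^i}w^i_{\mathbf v}[a]$.
   Context: Repeated game with $N$ players, finite pure action sets $\mathcal A^i$ of size $K$; each round every player $i$ independently draws $A^i_t\sim s^i(h_t)$ where $s^i:\mathcal H\to\Delta(\mathcal A^i)$ maps public histories $h_t=(A_0,\dots,A_{t-1})$ of realized pure action profiles to mixed actions; $\mathcal S^i$ the set of such strategies; $\mathbb P^{\mathbf s},\mathbb E^{\mathbf s}$ the law/expectation induced by profile $\mathbf s$. A cooperative mixed profile $\mathbf w_{\mathbf v}=(w^1_{\mathbf v},\dots,w^N_{\mathbf v})$ is fixed. For each $i$, $a\in\mathcal A^i$: $N^i_t(a)=\sum_{s=0}^{t-1}\mathbf 1\{A^i_s=a\}$, $\hat w^i_t(a)=(N^i_t(a)+1)/(t+K)$, $E^i_t=\prod_{s=0}^t\hat w^i_s(A^i_s)/w^i_{\mathbf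 v}(A^i_s)$ ($c/0=+\infty$ for $c>0$). Stationary strategies $\tilde{\mathfrak S}^i=\{s\in\mathcal S^i:\exists\tilde w^i\in\Delta(\mathcal A^i),\ s(h_t)=\tilde w^i\ \forall t,h_t\}$, $\tilde{\mathfrak S}=\prod_i\tilde{\mathfrak S}^i$; $\mathsf B^i(\mathbf w_{\mathbf v},\varepsilon)=\{s\in\mathcal S^i:\|s(h_t)-w^i_{\mathbf v}\|_1\le2\varepsilon\ \forall t,h_t\}$; $\tilde{\mathfrak S}(\mathbf w_{\mathbf v},\varepsilon)=\{\mathbf s\in\tilde{\mathfrak S}:\exists i,\ s^i\in\tilde{\mathfrak S}^i\setminus\mathsf B^i(\mathbf w_{\mathbf v},\varepsilon)\}$. *)

From HB Require Import structures.
From mathcomp Require Import all_boot all_order all_algebra.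
From mathcomp Require Import all_classical all_reals all_analysis.
Set Implicit Arguments. Unset Strict Implicit. Unset Printing Implicit Defensive.
Import Order.TTheory GRing.Theory Num.Theory.
Local Open Scope ring_scope.

Section Game.
Variables (R : realType) (N K : nat).

Definition profile := {ffun 'I_N -> 'I_K}.
(* a public history h_t = (A_0,...,A_{t-1}) *)
Definition history := seq profile.
Definition mixed := {ffun 'I_K -> R}.

Definition is_dist (p : mixed) : Prop :=
  (forall a, 0 <= p a) /\ \sum_a p a = 1.

Definition strat_profile := 'I_N -> history -> mixed.

Fixpoint hist_prob_aux (s : strat_profile) (past : history) (h : history) : R :=
  match h with
  | [::] => 1
  | p :: h' => (\prod_i s i past (p i)) * hist_prob_aux s (rcons past p) h'
  end.
Definition hist_prob (s : strat_profile) (h : history) : R := hist_prob_aux s [::] h.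

Definition what (i : 'I_N) (past : history) (a : 'I_K) : R :=
  (count (fun q : profile => q i == a) past + 1)%:R / (size past + K)%:R.

Fixpoint Eprod_aux (w : 'I_N -> mixed) (i : 'I_N) (past h : history) : R :=
  match h with
  | [::] => 1
  | p :: h' => (what i past (p i) / w i (p i)) * Eprod_aux w i (rcons past p) h'
  end.

(* E^i_t computed on the history (A_0,...,A_t) (length t+1);
   convention c/0 = +oo (hat w > 0 always), so E = +oo as soon as some
   A^i_s has w^i(A^i_s) = 0 *)
Definition Estat (w : 'I_N -> mixed) (i : 'I_N) (g : history) : \bar R :=
  if has (fun p : profile => w i (p i) == 0) g then +oo%E
  else (Eprod_aux w i [::] g)%:E.

Definition test_fires (w : 'I_N -> mixed) (gamma : R) (i : 'I_N) (u : nat)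
    (h : history) : bool :=
  ((N%:R / gamma)%:E <= Estat w i (take u.+1 h))%E.

(* event {tau > t}: no test fired at any time 1 <= u <= t, for any player;
   it depends only on A_0..A_t *)
Definition no_stop_by (w : 'I_N -> mixed) (gamma : R) (t : nat) (h : history) : bool :=
  [forall i : 'I_N, forall u : 'I_t.+1, (0 < (u : nat))%N ==> ~~ test_fires w gamma i u h].

Definition prob_tau_gt (s : strat_profile) (w : 'I_N -> mixed) (gamma : R) (t : nat) : R :=
  \sum_(h : (t.+1).-tuple profile)
     (if no_stop_by w gamma t h then hist_prob s h else 0).

(* E^s[tau] for the N u {+oo}-valued stopping time, via E[tau] = sum_t P(tau > t) *)
Definition expected_tau (s : strat_profile) (w : 'I_N -> mixed) (gamma : R) : \bar R :=
  (\sum_(0 <= t <oo) (prob_tau_gt s w gamma t)%:E)%E.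

Definition stationary (si : history -> mixed) : Prop :=
  exists wt : mixed, is_dist wt /\ forall h, si h = wt.

Definition in_ball (w : 'I_N -> mixed) (eps : R) (i : 'I_N) (si : history -> mixed) : Prop :=
  forall h, \sum_a `|si h a - w i a| <= 2 * eps.

Definition dev_stationary (w : 'I_N -> mixed) (eps : R) (s : strat_profile) : Prop :=
  (forall i, stationary (s i)) /\ exists i, ~ in_ball w eps i (s i).

(* underline w_v = min_i min_a w^i[a]  (entries are <= 1, so 1 is a neutral seed) *)
Definition wmin (w : 'I_N -> mixed) : R :=
  \big[Num.min/1]_(i < N) \big[Num.min/1]_(a < K) w i a.

(* tilde tau_eps; equals +oo when underline w = 0 since |log 0| = +oo *)
Definition tau_eps_bound (C eps gamma : R) (w : 'I_N -> mixed) : \bar R :=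
  if wmin w == 0 then +oo%E
  else ((10 * ln (1 / gamma)) / eps ^+ 2
        + C * (1 + `|ln (wmin w)|) / eps ^+ 5)%:E.

End Game.

From HB Require Import structures.
From mathcomp Require Import all_boot all_order all_algebra.
From mathcomp Require Import all_classical all_reals all_analysis.
From mathcomp Require Import ring lra zify.
Set Implicit Arguments. Unset Strict Implicit. Unset Printing Implicit Defensive.
Import Order.TTheory GRing.Theory Num.Theory.
Local Open Scope ring_scope.

(* Let player i play the fixed mixed action wt with ||wt - w||_1 > 2 eps.  The
   Laplace predictions multiply to a Dirichlet mixture of i.i.d. likelihoods, so
   for every distribution p on actions, prod_s p(A_s) <= (t+2)^K E_t prod_s w(A_s)
   (a multinomial coefficient bound).  On {tau > t} we have E_t < N/gamma, hence
   the probability of a surviving history is at most sqrt((N/gamma)(t+2)^K)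
   times prod_s sqrt(wt w)(A_s); summing over histories gives
   P(tau > t) <= sqrt((N/gamma)(t+2)^K) rho^(t+1), where the Bhattacharyya
   affinity rho of wt and w is at most 1 - eps^2/2.  After a burn-in of order
   log(N/gamma)/eps^2 + K^2/eps^4 this is dominated by exp(-eps^2/4)^t, whose sum
   is at most 1 + 4/eps^2. *)

Lemma multinomial_mass_le (R : realFieldType) (K : nat) (p : 'I_K -> R)
    (c : 'I_K -> nat) :
  (forall a, 0 <= p a) -> \sum_a p a <= 1 ->
  (\sum_a c a)`!%:R * \prod_a p a ^+ c a <= \prod_a (c a)`!%:R.
Proof.
move=> p_ge0 p_le1; move sum_c : (\sum_a c a)%N => n.
elim: n c sum_c => [|n IHn] c sum_c.
  have c0 a : c a = 0%N by apply/eqP; rewrite -leqn0 -sum_c (bigD1 a) ?leq_addr.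
  by rewrite mul1r !big1 // => a _; rewrite c0.
have fact_ge0 : 0 <= \prod_a (c a)`!%:R :> R by rewrite prodr_ge0.
have step a : (c a)%:R * (n`!%:R * \prod_b p b ^+ c b)
              <= p a * \prod_b (c b)`!%:R.
  case ca: (c a) => [|k]; first by rewrite mul0r mulr_ge0.
  pose c' b := if b == a then k else c b.
  have c'E b : b != a -> c' b = c b by rewrite /c' => /negPf ->.
  have /IHn IHc' : (\sum_b c' b)%N = n.
    move: sum_c; rewrite (bigD1 a) //= ca => -[<-].
    rewrite (bigD1 a) //= /c' eqxx; congr (_ + _)%N.
    by apply: eq_bigr => b /negPf ->.
  rewrite (bigD1 a) //= [X in _ <= _ * X](bigD1 a) //= ca exprS factS natrM.
  rewrite (bigD1 a) //= [X in _ <= X](bigD1 a) //= /c' eqxx in IHc'.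
  rewrite (eq_bigr (fun b => p b ^+ c b)) in IHc'; last by move=> b /negPf ->.
  rewrite [X in _ <= _ * X](eq_bigr (fun b => (c b)`!%:R)) in IHc'; last first.
    by move=> b /negPf ->.
  move: IHc' => /(ler_wpM2l (mulr_ge0 (ler0n R k.+1) (p_ge0 a))).
  by congr (_ <= _); ring.
rewrite factS -{1}sum_c natrM natr_sum -mulrA big_distrl /=.
apply: le_trans (ler_sum _ (fun a _ => step a)) _.
by rewrite -big_distrl /= ler_piMl.
Qed.

Lemma bernoulli_expn (a K : nat) : (a ^ K * (a + K) <= (a + 1) ^ K * a)%N.
Proof.
elim: K => [|K IHK]; first by rewrite !expn0 addn0.
have : (a ^ K <= (a + 1) ^ K)%N by case: (K) => [|k]; rewrite ?expn0 ?leq_exp2r ?leq_addr.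
rewrite !expnS; move: IHK; move: (a ^ K)%N ((a + 1) ^ K)%N => x y; nia.
Qed.

Lemma rising_factorial_le (n K : nat) :
  (\prod_(k < n) (k + K) <= (n + 1) ^ K * n`!)%N.
Proof.
elim: n => [|n IHn]; first by rewrite big_ord0 fact0 add0n exp1n.
rewrite big_ord_recr /= factS -[n.+1]addn1.
move: IHn (bernoulli_expn (n + 1) K).
move: (\prod_(k < n) (k + K))%N ((n + 1) ^ K)%N ((n + 1 + 1) ^ K)%N n`! => x y z f.
nia.
Qed.

Lemma sum_tuple_prod (R : comPzSemiRingType) (T : finType) (F : T -> R) (n : nat) :
  \sum_(h : n.-tuple T) \prod_(q <- h) F q = (\sum_q F q) ^+ n.
Proof.
rewrite -[n in RHS]card_ord -prodr_const bigA_distr_bigA /=.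
rewrite (reindex (@finfun_of_tuple T n)); last first.
  by exists (@tuple_of_finfun T n) => x _; rewrite ?finfun_of_tupleK ?tuple_of_finfunK.
apply: eq_bigr => h _; rewrite big_tuple; apply: eq_bigr => k _.
by rewrite ffunE.
Qed.

(* AM-GM applied to |a - b| and |e| |a + b| / 2. *)
Lemma mulr_normB_sqr_le (R : realFieldType) (e a b : R) :
  e * `|a ^+ 2 - b ^+ 2| <= (a - b) ^+ 2 + e ^+ 2 / 4 * (a + b) ^+ 2.
Proof.
rewrite subr_sqr normrM -(real_normK (num_real (a - b))).
rewrite -(real_normK (num_real (a + b))) -(real_normK (num_real e)).
have := sqr_ge0 (`|a - b| - `|e| * `|a + b| / 2).
have : 0 <= `|a - b| * `|a + b| * (`|e| - e).
  by rewrite !mulr_ge0 // subr_ge0 ler_norm.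
have := ler_norm e; have := normr_ge0 (a - b); have := normr_ge0 (a + b).
move: `|e| `|a - b| `|a + b| => f x y; nra.
Qed.

Lemma bhattacharyya_le (R : rcfType) (K : nat) (p q : 'I_K -> R) (eps : R) :
  (forall a, 0 <= p a) -> (forall a, 0 <= q a) ->
  \sum_a p a = 1 -> \sum_a q a = 1 -> 0 < eps -> 2 * eps < \sum_a `|p a - q a| ->
  \sum_a Num.sqrt (p a * q a) <= 1 - eps ^+ 2 / 2.
Proof.
move=> p_ge0 q_ge0 p_sum1 q_sum1 eps_gt0 far; set rho := \sum_a _.
have sqrtE a : Num.sqrt (p a * q a) = Num.sqrt (p a) * Num.sqrt (q a) by rewrite sqrtrM.
have sum_sqrB : \sum_a (Num.sqrt (p a) - Num.sqrt (q a)) ^+ 2 = 2 - 2 * rho.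
  under eq_bigr do rewrite sqrrB !sqr_sqrtr // -sqrtE.
  by rewrite !big_split /= sumrN sumrMnl p_sum1 q_sum1 -/rho -mulr_natl; lra.
have sum_sqrD : \sum_a (Num.sqrt (p a) + Num.sqrt (q a)) ^+ 2 = 2 + 2 * rho.
  under eq_bigr do rewrite sqrrD !sqr_sqrtr // -sqrtE.
  by rewrite !big_split /= p_sum1 q_sum1 -/rho; lra.
have rho_le1 : 0 <= 2 - 2 * rho by rewrite -sum_sqrB sumr_ge0 // => a _; rewrite sqr_ge0.
have : eps * \sum_a `|p a - q a| <= 2 - 2 * rho + eps ^+ 2 / 4 * (2 + 2 * rho).
  rewrite -sum_sqrB -sum_sqrD !mulr_sumr -big_split /=; apply: ler_sum => a _.
  by rewrite -{1}(sqr_sqrtr (p_ge0 a)) -{1}(sqr_sqrtr (q_ge0 a)) mulr_normB_sqr_le.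
have : 0 < eps * (\sum_a `|p a - q a| - 2 * eps) by rewrite mulr_gt0 // subr_gt0.
have := mulr_ge0 (sqr_ge0 eps) rho_le1.
lra.
Qed.

Lemma le_sqrt_mul_of_le_mul (R : rcfType) (a x y z : R) :
  0 <= a -> 0 <= x -> 0 <= z -> z ^+ 2 = x * y -> x <= a * y ->
  x <= Num.sqrt a * z.
Proof.
move=> a_ge0 x_ge0 z_ge0 zE x_le.
rewrite -(ler_pXn2r (_ : 0 < 2)%N) ?nnegrE ?mulr_ge0 ?sqrtr_ge0 //.
by rewrite exprMn sqr_sqrtr // zE mulrCA expr2 ler_wpM2l.
Qed.

Lemma sum_normB_le2 (R : realDomainType) (K : nat) (p q : 'I_K -> R) :
  (forall a, 0 <= p a) -> (forall a, 0 <= q a) ->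
  \sum_a p a = 1 -> \sum_a q a = 1 -> \sum_a `|p a - q a| <= 2.
Proof.
move=> p_ge0 q_ge0 p_sum1 q_sum1.
rewrite (le_trans (ler_sum _ (fun a _ => ler_normB (p a) (q a)))) //.
by rewrite big_split /= !(eq_bigr _ (fun a _ => ger0_norm _)) // p_sum1 q_sum1.
Qed.

Section Tail.
Variable R : realType.

Lemma geometric_sum_le (x : R) (T : nat) :
  0 <= x < 1 -> \sum_(t < T) x ^+ t <= (1 - x)^-1.
Proof.
case/andP=> x_ge0 x_lt1; have x1 : 0 < 1 - x by rewrite subr_gt0.
have sumE : (1 - x) * \sum_(t < T) x ^+ t = 1 - x ^+ T.
  by rewrite -opprB mulNr -subrX1 opprB.
by rewrite -(ler_pM2l x1) mulfV ?gt_eqF // sumE gerBl exprn_ge0.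
Qed.

Lemma sum_lt_indicator_le (A : R) (T : nat) : 0 <= A ->
  \sum_(t < T) ((t.+1)%:R < A :> R)%:R <= A.
Proof.
move=> A_ge0; elim: T => [|T IHT]; first by rewrite big_ord0.
rewrite big_ord_recr /=; case: ltP => [TA|_]; last by rewrite addr0.
have : \sum_(t < T) ((t.+1)%:R < A :> R)%:R <= T%:R :> R.
  rewrite -[T in T%:R]card_ord -sum1_card natr_sum ler_sum // => t _.
  by case: ltP.
by move: TA; rewrite -natr1 /=; lra.
Qed.

Lemma inv_subr_expRN_le (v : R) : 0 < v -> (1 - expR (- v))^-1 <= 1 + v^-1.
Proof.
move=> v_gt0; have xv : expR (- v) * (1 + v) <= 1.
  by rewrite -[leRHS](expRxMexpNx_1 v) [leRHS]mulrC ler_pM2l ?expR_gt0 ?expR_ge1Dx.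
have x_lt1 : expR (- v) < 1 by rewrite expR_lt1 oppr_lt0.
rewrite -[(1 - _)^-1]mul1r ler_pdivrMr ?subr_gt0 //.
have vV : v * v^-1 = 1 by rewrite mulfV ?gt_eqF.
have : 0 <= v^-1 * (1 - expR (- v) * (1 + v)).
  by rewrite mulr_ge0 ?subr_ge0 // invr_ge0 ltW.
move: vV (expR_gt0 (- v)); move: (v^-1) (expR (- v)) => w x; nra.
Qed.

Lemma poly_le_expR (eps m : R) (K : nat) : 0 < eps -> 1 <= m ->
  32 * K%:R ^+ 2 / eps ^+ 4 <= m -> (m + 1) ^+ K <= expR (eps ^+ 2 * m / 4).
Proof.
move=> eps_gt0 m_ge1 m_large; have e4 : 0 < eps ^+ 4 by rewrite exprn_gt0.
have [->|K_gt0] := posnP K.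
  by rewrite expr0 -expR0 ler_expR divr_ge0 ?mulr_ge0 ?sqr_ge0 //; lra.
have k_gt0 : 0 < K%:R :> R by rewrite ltr0n.
set y := eps ^+ 2 * m / (4 * K%:R).
have -> : eps ^+ 2 * m / 4 = K%:R * y by rewrite /y; field; rewrite gt_eqF.
rewrite expRM_natl lerXn2r ?nnegrE ?expR_ge0 ?addr_ge0 ?(le_trans ler01 m_ge1) //.
apply: le_trans (expR_ge1Dxn 1 _); last by rewrite /y divr_ge0 ?mulr_ge0 ?sqr_ge0 //; lra.
rewrite [m + 1]addrC lerD2l (_ : 2`!%:R = 2 :> R) // /y.
rewrite ler_pdivrMr // in m_large.
have -> : (eps ^+ 2 * m / (4 * K%:R)) ^+ 2 / 2 = m * (eps ^+ 4 * m) / (32 * K%:R ^+ 2).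
  by field; rewrite gt_eqF.
rewrite ler_pdivlMr ?mulr_gt0 ?exprn_gt0 //.
by rewrite -mulrA ler_wpM2l //; lra.
Qed.

Lemma sqrt_mul_expr_le_expR (c rho eps : R) (K n : nat) :
  0 < eps -> 1 <= c -> 0 <= rho -> rho <= 1 - eps ^+ 2 / 2 -> (0 < n)%N ->
  4 * ln c / eps ^+ 2 + 32 * K%:R ^+ 2 / eps ^+ 4 <= n%:R ->
  Num.sqrt (c * (n.+1 ^ K)%:R) * rho ^+ n <= expR (- (eps ^+ 2 / 4)) ^+ n.
Proof.
move=> eps_gt0 c_ge1 rho_ge0 rho_le n_gt0 n_large.
have e2 : 0 < eps ^+ 2 by rewrite exprn_gt0.
have e4 : 0 < eps ^+ 4 by rewrite exprn_gt0.
have c_ge0 : 0 <= c := le_trans ler01 c_ge1.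
have lnc_ge0 : 0 <= ln c by rewrite ln_ge0.
have c_le : c <= expR (eps ^+ 2 * n%:R / 4).
  rewrite -[c]lnK ?posrE ?(lt_le_trans ltr01 c_ge1) // ler_expR.
  have : 4 * ln c / eps ^+ 2 <= n%:R.
    by apply: le_trans n_large; rewrite lerDl divr_ge0 ?mulr_ge0 ?sqr_ge0 // ltW.
  by rewrite ler_pdivrMr //; lra.
have G_le : (n.+1 ^ K)%:R <= expR (eps ^+ 2 * n%:R / 4).
  rewrite natrX -addn1 natrD poly_le_expR // ?ler1n //.
  by apply: le_trans n_large; rewrite lerDr divr_ge0 ?mulr_ge0 // ltW.
have rho_le_exp : rho <= expR (- (eps ^+ 2 / 2)).
  by apply: le_trans rho_le _; apply: le_trans (expR_ge1Dx _); lra.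
have rho_pow : (rho ^+ n) ^+ 2 <= expR (- (eps ^+ 2 / 2)) ^+ (n * 2).
  by rewrite -exprM lerXn2r ?nnegrE ?expR_ge0.
rewrite -(ler_pXn2r (_ : 0 < 2)%N) ?nnegrE ?mulr_ge0 ?sqrtr_ge0 ?exprn_ge0 ?expR_ge0 //.
rewrite exprMn sqr_sqrtr ?mulr_ge0 ?ler0n //.
have -> : expR (- (eps ^+ 2 / 4)) ^+ n ^+ 2 = expR (eps ^+ 2 * n%:R / 4)
    * expR (eps ^+ 2 * n%:R / 4) * expR (- (eps ^+ 2 / 2)) ^+ (n * 2).
  by rewrite -!expRM_natl -!expRD; congr expR; rewrite natrM; field.
apply: ler_pM (ler_pM c_ge0 (ler0n _ _) c_le G_le) rho_pow.
  by rewrite mulr_ge0 ?ler0n.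
exact: sqr_ge0.
Qed.

Lemma sum_tail_le (u : nat -> R) (c rho eps : R) (K T : nat) :
  0 < eps -> 1 <= c -> 0 <= rho -> rho <= 1 - eps ^+ 2 / 2 ->
  (forall t, u t <= 1) ->
  (forall t, (0 < t)%N -> u t <= Num.sqrt (c * (t.+2 ^ K)%:R) * rho ^+ t.+1) ->
  \sum_(t < T) u t <=
    4 * ln c / eps ^+ 2 + 32 * K%:R ^+ 2 / eps ^+ 4 + 1 + 4 / eps ^+ 2.
Proof.
move=> eps_gt0 c_ge1 rho_ge0 rho_le u_le1 u_le.
set A := 4 * ln c / eps ^+ 2 + _.
have e2 : 0 < eps ^+ 2 by rewrite exprn_gt0.
have A_ge0 : 0 <= A.
  have lnc_ge0 := ln_ge0 c_ge1.
  by rewrite /A addr_ge0 // divr_ge0 ?mulr_ge0 ?exprn_ge0 ?ler0n // ltW.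
set x := expR (- (eps ^+ 2 / 4)).
have x_ge0 : 0 <= x by rewrite expR_ge0.
have x_lt1 : x < 1 by rewrite expR_lt1 oppr_lt0 divr_gt0.
have u_le_split t : u t <= ((t.+1)%:R < A :> R)%:R + x ^+ t.
  case: ltP => [_|A_le]; first by rewrite (le_trans (u_le1 t)) // lerDl exprn_ge0.
  case: t A_le => [|t] A_le; first by rewrite add0r expr0.
  have tail_le := sqrt_mul_expr_le_expR (n := t.+2) eps_gt0 c_ge1 rho_ge0 rho_le isT A_le.
  rewrite add0r (le_trans (u_le t.+1 isT)) // (le_trans tail_le) //.
  exact: ler_wiXn2l x_ge0 (ltW x_lt1) _ _ (leqnSn t.+1).
apply: le_trans (_ : _ <= \sum_(t < T) (((t.+1)%:R < A :> R)%:R + x ^+ t)) _.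
  by apply: ler_sum => t _; exact: u_le_split.
rewrite big_split /= -addrA lerD ?sum_lt_indicator_le //.
have x01 : 0 <= x < 1 by rewrite x_ge0 x_lt1.
apply: le_trans (geometric_sum_le T x01) _.
by rewrite /x -[4 / _]invf_div inv_subr_expRN_le // divr_gt0.
Qed.
End Tail.

Lemma nneseries_le_of_partial (R : realType) (u : nat -> R) (B : R) :
  (forall t, 0 <= u t) -> (forall T, \sum_(t < T) u t <= B) ->
  (\sum_(0 <= t <oo) (u t)%:E <= B%:E)%E.
Proof.
move=> u_ge0 u_le; apply: lime_le.
  by apply: is_cvg_nneseries => t _; rewrite lee_fin.
by apply: nearW => T; rewrite sumEFin lee_fin big_mkord.
Qed.

Lemma tail_constant_le (R : realFieldType) (eps lN L W k : R) :
  0 < eps -> eps <= 1 -> 0 <= lN -> 0 <= L -> 0 <= W -> 0 <= k ->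
  4 * (lN + L) / eps ^+ 2 + 32 * k / eps ^+ 4 + 1 + 4 / eps ^+ 2
  <= 10 * L / eps ^+ 2 + (4 * lN + 32 * k + 5) * (1 + W) / eps ^+ 5.
Proof.
move=> eps_gt0 eps_le1 lN_ge0 L_ge0 W_ge0 k_ge0.
have inv_le m n : (m <= n)%N -> (eps ^+ m)^-1 <= (eps ^+ n)^-1.
  move=> mn; rewrite lef_pV2 ?posrE ?exprn_gt0 //.
  exact: ler_wiXn2l (ltW eps_gt0) eps_le1 _ _ mn.
have d2_ge0 : 0 <= (eps ^+ 2)^-1 by rewrite invr_ge0 exprn_ge0 // ltW.
have := inv_le 2 5 isT; have := inv_le 4 5 isT; have := inv_le 0 5 isT.
rewrite expr0 invr1; move: d2_ge0; move: (eps ^+ 2)^-1 (eps ^+ 4)^-1 (eps ^+ 5)^-1.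
move=> d2 d4 d5 d2_ge0 d5_ge1 d45 d25.
have : 0 <= lN * (d5 - d2) by rewrite mulr_ge0 // subr_ge0.
have : 0 <= k * (d5 - d4) by rewrite mulr_ge0 // subr_ge0.
have : 0 <= (4 * lN + 32 * k + 5) * W * d5.
  by rewrite !mulr_ge0 ?(le_trans ler01 d5_ge1) //; lra.
have := mulr_ge0 L_ge0 d2_ge0.
nra.
Qed.

Section LaplaceMixture.
Variables (R : realType) (N K : nat) (w : 'I_N -> mixed R K) (i : 'I_N).

Definition action_count (a : 'I_K) (h : history N K) : nat :=
  count (fun q : profile N K => q i == a) h.

Lemma sum_action_count (h : history N K) : (\sum_a action_count a h)%N = size h.
Proof.
elim: h => [|q h IHh] /=; first by rewrite big1.
rewrite -IHh big_split /= (bigD1 (q i)) //= eqxx big1 ?add0n // => a.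
by rewrite eq_sym => /negPf ->.
Qed.

Lemma prod_action_count (p : 'I_K -> R) (h : history N K) :
  \prod_(q <- h) p (q i) = \prod_a p a ^+ action_count a h.
Proof.
elim: h => [|q h IHh] /=; first by rewrite big_nil big1.
rewrite big_cons; under [RHS]eq_bigr do rewrite exprD.
rewrite big_split /= (bigD1 (q i)) //= IHh; congr (_ * _).
rewrite eqxx big1 ?mulr1 // => a.
by rewrite eq_sym => /negPf ->.
Qed.

Lemma prod_fact_action_count_rcons (h : history N K) (q : profile N K) :
  \prod_a (action_count a (rcons h q))`!%:R =
  (action_count (q i) h).+1%:R * \prod_a (action_count a h)`!%:R :> R.
Proof.
rewrite (bigD1 (q i)) //= [in RHS](bigD1 (q i)) //= mulrA; congr (_ * _).
  by rewrite /action_count -cats1 count_cat /= eqxx addn1 factS natrM.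
apply: eq_bigr => a /negPf qa; rewrite /action_count -cats1 count_cat /=.
by rewrite eq_sym qa !addn0.
Qed.

Lemma Eprod_aux_ge0 (past h : history N K) :
  (forall a, 0 <= w i a) -> 0 <= Eprod_aux w i past h.
Proof.
move=> w_ge0; elim: h past => [|q h IHh] past //=.
by rewrite mulr_ge0 ?divr_ge0 ?IHh.
Qed.

(* Eprod_aux is the ratio of the Dirichlet(1, ..., 1) mixture of i.i.d. laws to
   the i.i.d. law w i, whence this product of factorials. *)
Lemma Eprod_aux_closed_form (past h : history N K) : (forall a, 0 < w i a) ->
  Eprod_aux w i past h * \prod_(q <- h) w i (q i)
    * \prod_(k < size h) (size past + k + K)%:R
    * \prod_a (action_count a past)`!%:R
  = \prod_a (action_count a (past ++ h))`!%:R.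
Proof.
move=> w_gt0; elim: h past => [|q h IHh] past /=.
  by rewrite big_nil big_ord0 cats0 !mul1r.
rewrite -cat_rcons -IHh prod_fact_action_count_rcons big_cons big_ord_recl.
rewrite size_rcons.
have -> : \prod_(k < size h) (size past + lift ord0 k + K)%:R =
          \prod_(k < size h) ((size past).+1 + k + K)%:R :> R.
  by apply: eq_bigr => k _; rewrite lift0 addnS.
have K_gt0 : (0 < K)%N := leq_ltn_trans (leq0n _) (ltn_ord (q i)).
have : (size past + 0 + K)%:R != 0 :> R.
  by rewrite pnatr_eq0 addn_eq0 (gtn_eqF K_gt0) andbF.
rewrite /what /action_count addn0 natrD => den_neq0.
by field; rewrite gt_eqF.
Qed.

Lemma iid_lik_le_Eprod (p : 'I_K -> R) (h : history N K) :
  (forall a, 0 < w i a) -> (forall a, 0 <= p a) -> \sum_a p a <= 1 ->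
  \prod_(q <- h) p (q i)
    <= Eprod_aux w i [::] h * \prod_(q <- h) w i (q i) * ((size h).+1 ^ K)%:R.
Proof.
move=> w_gt0 p_ge0 p_le1.
have closed := Eprod_aux_closed_form [::] h w_gt0.
rewrite [X in _ * X = _]big1 ?mulr1 in closed; last first.
  by move=> a _; rewrite /action_count /= fact0.
have EW_ge0 : 0 <= Eprod_aux w i [::] h * \prod_(q <- h) w i (q i).
  by rewrite mulr_ge0 ?prodr_ge0 ?Eprod_aux_ge0 // => *; apply: ltW.
rewrite -(ler_pM2l (_ : 0 < (size h)`!%:R)) ?ltr0n ?fact_gt0 //.
rewrite prod_action_count -{1}sum_action_count.
apply: le_trans (multinomial_mass_le (action_count^~ h) p_ge0 p_le1) _.
rewrite -closed /= [leRHS]mulrC -[leRHS]mulrA; apply: ler_wpM2l => //.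
rewrite -natr_prod -natrM ler_nat.
under eq_bigr do rewrite add0n.
by rewrite -[(size h).+1]addn1 rising_factorial_le.
Qed.
End LaplaceMixture.

Lemma stationary_profile (R : realType) (N K : nat) (s : strat_profile R N K) :
  (forall j, stationary (s j)) ->
  exists wt : 'I_N -> mixed R K, (forall j, is_dist (wt j)) /\ forall j h, s j h = wt j.
Proof.
move=> s_stat; exists (fun j => s j [::]); split=> [j|j h].
  by have [v [v_dist ->]] := s_stat j.
by have [v [_ sv]] := s_stat j; rewrite /= !sv.
Qed.

Lemma wmin_gt0 (R : realType) (N K : nat) (w : 'I_N -> mixed R K) :
  (forall i, is_dist (w i)) -> wmin w != 0 -> forall i a, 0 < w i a.
Proof.
move=> w_dist wmin_neq0 i a.
have wmin_ge0 : 0 <= wmin w.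
  by apply: le_bigmin => // j _; apply: le_bigmin => // b _; apply: (w_dist j).1.
have wmin_le : wmin w <= w i a := le_trans (bigmin_le _ i _) (bigmin_le _ a _).
by rewrite (lt_le_trans _ wmin_le) // lt_def wmin_neq0.
Qed.

Section StationaryPlay.
Variables (R : realType) (N K : nat) (w wt : 'I_N -> mixed R K) (i : 'I_N).
Hypothesis w_gt0 : forall a, 0 < w i a.
Hypothesis wt_dist : forall j, is_dist (wt j).

Definition affinity_weight (j : 'I_N) (a : 'I_K) : R :=
  if j == i then Num.sqrt (wt i a * w i a) else wt j a.

Lemma affinity_weight_ge0 (j : 'I_N) (a : 'I_K) : 0 <= affinity_weight j a.
Proof.
by rewrite /affinity_weight; case: eqP => _; rewrite ?sqrtr_ge0 ?(wt_dist j).1.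
Qed.

Lemma sum_prod_affinity_weight :
  \sum_(q : profile N K) \prod_j affinity_weight j (q j)
  = \sum_a Num.sqrt (wt i a * w i a).
Proof.
rewrite -(bigA_distr_bigA affinity_weight) /= (bigD1 i) //= [X in _ * X]big1 ?mulr1.
  by apply: eq_bigr => a _; rewrite /affinity_weight eqxx.
move=> j /negPf ji; under eq_bigr do rewrite /affinity_weight ji.
exact: (wt_dist j).2.
Qed.

Lemma sum_prod_wt : \sum_(q : profile N K) \prod_j wt j (q j) = 1.
Proof.
by rewrite -(bigA_distr_bigA (fun j a => wt j a)) big1 // => j _; rewrite (wt_dist j).2.
Qed.

Lemma prod_wt_le_affinity (c : R) (h : history N K) : 0 < c ->
  (Estat w i h < c%:E)%E ->
  \prod_(q <- h) \prod_j wt j (q j)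
    <= Num.sqrt (c * ((size h).+1 ^ K)%:R)
       * \prod_(q <- h) \prod_j affinity_weight j (q j).
Proof.
move=> c_gt0 E_lt; have wt_ge0 j a : 0 <= wt j a := (wt_dist j).1 a.
set others := \prod_(q <- h) \prod_(j | j != i) wt j (q j).
have splitE (F : 'I_N -> 'I_K -> R) : (forall j, j != i -> F j =1 wt j) ->
    \prod_(q <- h) \prod_j F j (q j) = \prod_(q <- h) F i (q i) * others.
  move=> FE; rewrite -big_split; apply: eq_bigr => q _; rewrite (bigD1 i) //=.
  by congr (_ * _); apply: eq_bigr => j /FE ->.
rewrite (splitE (fun j a => wt j a)) // (splitE affinity_weight); last first.
  by move=> j /negPf ji a; rewrite /affinity_weight ji.
rewrite mulrA; apply: ler_wpM2r; first by rewrite prodr_ge0 // => q _; rewrite prodr_ge0.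
under [X in _ <= _ * X]eq_bigr do rewrite /affinity_weight eqxx.
apply: (le_sqrt_mul_of_le_mul (y := \prod_(q <- h) w i (q i))).
- by rewrite mulr_ge0 // ltW.
- by rewrite prodr_ge0.
- by rewrite prodr_ge0 // => q _; rewrite sqrtr_ge0.
- rewrite -prodrXl -big_split; apply: eq_bigr => q _.
  by rewrite sqr_sqrtr // mulr_ge0 // ltW.
have no_zero : has (fun q : profile N K => w i (q i) == 0) h = false.
  by apply/hasPn => q _; rewrite gt_eqF.
rewrite /Estat no_zero lte_fin in E_lt.
have wt_sum_le1 : \sum_a wt i a <= 1 by rewrite (wt_dist i).2.
apply: le_trans (iid_lik_le_Eprod h w_gt0 (wt_ge0 i) wt_sum_le1) _.
rewrite mulrAC; apply: ler_wpM2r; first by rewrite prodr_ge0 // => q _; rewrite ltW.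
by apply: ler_wpM2r; rewrite ?ler0n ?ltW.
Qed.

Lemma prod_wt_ge0 (h : history N K) : 0 <= \prod_(q <- h) \prod_j wt j (q j).
Proof.
by rewrite prodr_ge0 // => q _; rewrite prodr_ge0 // => j _; apply: (wt_dist j).1.
Qed.

Variable s : strat_profile R N K.
Hypothesis s_stationary : forall j h, s j h = wt j.

Lemma hist_prob_stationary (h : history N K) :
  hist_prob s h = \prod_(q <- h) \prod_j wt j (q j).
Proof.
rewrite /hist_prob; elim: h [::] => [|q h IHh] past /=; first by rewrite big_nil.
by rewrite big_cons IHh; under eq_bigr do rewrite s_stationary.
Qed.

Lemma prob_tau_gt_ge0 (gamma : R) (t : nat) : 0 <= prob_tau_gt s w gamma t.
Proof.
rewrite sumr_ge0 // => h _.
by case: ifP => // _; rewrite hist_prob_stationary prod_wt_ge0.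
Qed.

Lemma prob_tau_gt_le1 (gamma : R) (t : nat) : prob_tau_gt s w gamma t <= 1.
Proof.
rewrite -(expr1n _ t.+1) -sum_prod_wt -sum_tuple_prod ler_sum // => h _.
by rewrite hist_prob_stationary; case: ifP => // _; rewrite prod_wt_ge0.
Qed.

Lemma prob_tau_gt_le_affinity (gamma : R) (t : nat) : 0 < gamma -> (0 < t)%N ->
  prob_tau_gt s w gamma t <= Num.sqrt (N%:R / gamma * (t.+2 ^ K)%:R)
                             * (\sum_a Num.sqrt (wt i a * w i a)) ^+ t.+1.
Proof.
move=> gamma_gt0 t_gt0.
have c_gt0 : 0 < N%:R / gamma by rewrite divr_gt0 // ltr0n (leq_ltn_trans _ (ltn_ord i)).
rewrite -sum_prod_affinity_weight -sum_tuple_prod mulr_sumr ler_sum // => h _.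
case: ifPn => [unstopped|_]; last first.
  rewrite mulr_ge0 ?sqrtr_ge0 // prodr_ge0 // => q _.
  by rewrite prodr_ge0 // => j _; apply: affinity_weight_ge0.
have E_lt : (Estat w i h < (N%:R / gamma)%:E)%E.
  (* the test of player i at time t, which sees all of h, has not fired *)
  move/forallP: unstopped => /(_ i) /forallP /(_ ord_max) /implyP /(_ t_gt0).
  by rewrite /test_fires -{1}(size_tuple h) take_size -ltNge.
by rewrite hist_prob_stationary; have := prod_wt_le_affinity c_gt0 E_lt; rewrite size_tuple.
Qed.

Lemma expected_tau_stationary_le (eps gamma : R) :
  0 < eps -> 0 < gamma -> gamma < 1 -> is_dist (w i) ->
  2 * eps < \sum_a `|wt i a - w i a| ->
  (expected_tau s w gamma <= (4 * ln (N%:R / gamma) / eps ^+ 2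
     + 32 * K%:R ^+ 2 / eps ^+ 4 + 1 + 4 / eps ^+ 2)%:E)%E.
Proof.
move=> eps_gt0 gamma_gt0 gamma_lt1 [w_ge0 w_sum1] far.
have c_ge1 : 1 <= N%:R / gamma.
  rewrite ler_pdivlMr // mul1r (le_trans (ltW gamma_lt1)) // ler1n.
  exact: leq_ltn_trans _ (ltn_ord i).
have rho_ge0 : 0 <= \sum_a Num.sqrt (wt i a * w i a).
  by rewrite sumr_ge0 // => a _; rewrite sqrtr_ge0.
have rho_le := bhattacharyya_le (wt_dist i).1 w_ge0 (wt_dist i).2 w_sum1 eps_gt0 far.
apply: nneseries_le_of_partial => [t|T]; first exact: prob_tau_gt_ge0.
apply: sum_tail_le eps_gt0 c_ge1 rho_ge0 rho_le _ _ => [t|t t_gt0].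
  exact: prob_tau_gt_le1.
exact: prob_tau_gt_le_affinity.
Qed.
End StationaryPlay.

Theorem mainTheorem5 (R : realType) (N K : nat) :
  exists C : R, 0 < C /\
  forall (w : 'I_N -> mixed R K) (eps gamma : R) (s : strat_profile R N K),
    (forall i, is_dist (w i)) ->
    0 < eps -> 0 < gamma -> gamma < 1 ->
    dev_stationary w eps s ->
    (expected_tau s w gamma <= tau_eps_bound C eps gamma w)%E.
Proof.
exists (4 * `|ln (N%:R : R)| + 32 * K%:R ^+ 2 + 5).
split; first by rewrite ltr_wpDl // addr_ge0 ?mulr_ge0 ?sqr_ge0.
move=> w eps gamma s w_dist eps_gt0 gamma_gt0 gamma_lt1 [s_stat [i not_ball]].
rewrite /tau_eps_bound; case: ifPn => [_|wmin_neq0]; first by rewrite leey.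
have [wt [wt_dist s_wt]] := stationary_profile s_stat.
have far : 2 * eps < \sum_a `|wt i a - w i a|.
  by rewrite ltNge; apply/negP => near; apply: not_ball => h; rewrite s_wt.
have eps_lt1 : eps < 1.
  move: (wt_dist i) (w_dist i) => [wt_ge0 wt_sum1] [w_ge0 w_sum1].
  by have := sum_normB_le2 wt_ge0 w_ge0 wt_sum1 w_sum1; lra.
apply: le_trans (expected_tau_stationary_le (wmin_gt0 w_dist wmin_neq0 i) wt_dist
  s_wt eps_gt0 gamma_gt0 gamma_lt1 (w_dist i) far) _.
have N_ge1 : 1 <= N%:R :> R by rewrite ler1n (leq_ltn_trans _ (ltn_ord i)).
rewrite lee_fin div1r lnM ?posrE ?invr_gt0 ?(lt_le_trans ltr01 N_ge1) //.
have gamma_inv_ge1 : 1 <= gamma^-1 by rewrite invf_ge1 // ltW.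
rewrite (ger0_norm (ln_ge0 N_ge1)).
exact: tail_constant_le eps_gt0 (ltW eps_lt1) (ln_ge0 N_ge1) (ln_ge0 gamma_inv_ge1)
  (normr_ge0 _) (sqr_ge0 _).
Qed.
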